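(* Let $I_\cap^2$ be as defined in the context. Then, for all jointly distributed finite-valued random variables: (GP) $I_\cap^2(\{X_1,X_2\};Y)\geq 0$; (S) $I_\cap^2(\{X_1,X_2\};Y)=I_\cap^2(\{X_2,X_1\};Y)$; (I) $I_\cap^2(\{X_1\};Y)=I(X_1;Y)$; (M) $I_\cap^2(\{X_1,X_2\};Y)\leq I_\cap^2(\{X_1\};Y)$, with equality if $H(X_1|X_2)=0$; (SM) $I_\cap^2(\{X_1,X_2\};Y)\leq I_\cap^2(\{X_1\};Y)$, with equality if $I(X_1X_2;Y)=I(X_2;Y)$. However, $I_\cap^2$ does not satisfy (LP) and (Id): (LP) there exist finite-valued $(X_1,X_2,Y)$ for which the derived synergy $SI^2(\{X_1X_2\};Y):=I(X_1X_2;Y)-I(X_1;Y)-I(X_2;Y)+I_\cap^2(\{X_1,X_2\};Y)$ is negative (so the derived decomposition is not nonnegative); (Id) there exist finite-valued $(X_1,X_2)$ such that $I_\cap^2(\{X_1,X_2\};(X_1,X_2))\neq I(X_1;X_2)$.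
   Context: For finite-valued random variables, $A-B-C$ means that $A$ and $C$ are conditionally independent given $B$. For jointly distributed finite random variables $(X_1,X_2,Y)$ define $$I_\cap^2(\{X_1,X_2\};Y)=\sup_{Q}\, I(Q;Y),$$ over all finite-valued random variables $Q$ jointly distributed with $(X_1,X_2,Y)$ (marginal of $(X_1,X_2,Y)$ fixed) such that $Q-X_1-Y$ and $Q-X_2-Y$ are Markov chains; for a single predictor, $I_\cap^2(\{X_1\};Y)=\sup_Q I(Q;Y)$ over all such $Q$ with $Q-X_1-Y$. $X_1X_2$ denotes the joint random variable $(X_1,X_2)$; $H$ and $I$ denote Shannon entropy and (conditional) mutual information. *)

From HB Require Import structures.
From mathcomp Require Import all_boot all_order all_algebra.
From mathcomp Require Import classical_sets boolp reals exp.
Set Implicit Arguments. Unset Strict Implicit. Unset Printing Implicit Defensive.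
Import Order.TTheory GRing.Theory Num.Theory.
Local Open Scope ring_scope.
Local Open Scope classical_set_scope.

Definition is_pmf (R : realType) (T : finType) (p : {ffun T -> R}) : Prop :=
  (forall x, 0 <= p x) /\ \sum_(x : T) p x = 1.

Definition marg (R : realType) (T U : finType) (f : T -> U) (p : {ffun T -> R})
  : {ffun U -> R} := [ffun u => \sum_(x : T | f x == u) p x].

Definition entropy (R : realType) (T : finType) (p : {ffun T -> R}) : R :=
  - \sum_(x : T) p x * ln (p x).

Definition Hrv (R : realType) (T U : finType) (f : T -> U) (p : {ffun T -> R}) : R :=
  entropy (marg f p).

Definition condH (R : realType) (T U V : finType) (f : T -> U) (g : T -> V)
  (p : {ffun T -> R}) : R :=
  Hrv (fun x => (f x, g x)) p - Hrv g p.

Definition MI (R : realType) (T U V : finType) (f : T -> U) (g : T -> V)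
  (p : {ffun T -> R}) : R :=
  Hrv f p + Hrv g p - Hrv (fun x => (f x, g x)) p.

(* Markov chain f - g - h : f and h conditionally independent given g,
   i.e. P(f=a,g=b,h=c) P(g=b) = P(f=a,g=b) P(g=b,h=c) for all a b c. *)
Definition markov (R : realType) (T A B C : finType) (f : T -> A) (g : T -> B)
  (h : T -> C) (p : {ffun T -> R}) : Prop :=
  forall a b c,
    marg (fun x => (f x, g x, h x)) p (a, b, c) * marg g p b
    = marg (fun x => (f x, g x)) p (a, b) * marg (fun x => (g x, h x)) p (b, c).

(* I_cap^2({X1,X2};Y) for a joint law p of (X1,X2,Y): sup of I(Q;Y) over all
   finite-valued Q coupled with (X1,X2,Y) (marginal p fixed) such that
   Q - X1 - Y and Q - X2 - Y. *)
Definition Icap2_set (R : realType) (T1 T2 TY : finType)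
  (p : {ffun T1 * T2 * TY -> R}) : set R :=
  [set v | exists (TQ : finType) (q : {ffun TQ * (T1 * T2 * TY) -> R}),
     [/\ is_pmf q, marg snd q = p,
         markov fst (fun w => w.2.1.1) (fun w => w.2.2) q,
         markov fst (fun w => w.2.1.2) (fun w => w.2.2) q &
         v = MI fst (fun w => w.2.2) q]].

Definition Icap2 (R : realType) (T1 T2 TY : finType)
  (p : {ffun T1 * T2 * TY -> R}) : R := sup (Icap2_set p).

(* I_cap^2({X1};Y) for a joint law p of (X1,Y). *)
Definition Icap1_set (R : realType) (T1 TY : finType)
  (p : {ffun T1 * TY -> R}) : set R :=
  [set v | exists (TQ : finType) (q : {ffun TQ * (T1 * TY) -> R}),
     [/\ is_pmf q, marg snd q = p,
         markov fst (fun w => w.2.1) (fun w => w.2.2) q &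
         v = MI fst (fun w => w.2.2) q]].

Definition Icap1 (R : realType) (T1 TY : finType)
  (p : {ffun T1 * TY -> R}) : R := sup (Icap1_set p).

Definition rX1 (T1 T2 TY : Type) (w : T1 * T2 * TY) : T1 := w.1.1.
Definition rX2 (T1 T2 TY : Type) (w : T1 * T2 * TY) : T2 := w.1.2.
Definition rY (T1 T2 TY : Type) (w : T1 * T2 * TY) : TY := w.2.
Definition rX12 (T1 T2 TY : Type) (w : T1 * T2 * TY) : T1 * T2 := w.1.

Definition swap12 (R : realType) (T1 T2 TY : finType) (p : {ffun T1 * T2 * TY -> R})
  : {ffun T2 * T1 * TY -> R} := marg (fun w => (w.1.2, w.1.1, w.2)) p.
Definition law1Y (R : realType) (T1 T2 TY : finType) (p : {ffun T1 * T2 * TY -> R})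
  : {ffun T1 * TY -> R} := marg (fun w => (w.1.1, w.2)) p.

Definition SI2 (R : realType) (T1 T2 TY : finType) (p : {ffun T1 * T2 * TY -> R}) : R :=
  MI (@rX12 T1 T2 TY) (@rY T1 T2 TY) p - MI (@rX1 T1 T2 TY) (@rY T1 T2 TY) p
  - MI (@rX2 T1 T2 TY) (@rY T1 T2 TY) p + Icap2 p.

Definition copyY (R : realType) (T1 T2 : finType) (p : {ffun T1 * T2 -> R})
  : {ffun T1 * T2 * (T1 * T2) -> R} := marg (fun w => (w.1, w.2, w)) p.

From HB Require Import structures.
From mathcomp Require Import all_boot all_order all_algebra.
From mathcomp Require Import classical_sets boolp reals exp.
From mathcomp Require Import ring lra.
Import Order.TTheory GRing.Theory Num.Theory.
Set Implicit Arguments. Unset Strict Implicit. Unset Printing Implicit Defensive.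
Local Open Scope ring_scope.
Local Open Scope classical_set_scope.

(* Every admissible Q satisfies Q - X1 - Y, so I(Q;Y) <= I(X1;Y) by data processing; the
   constant Q shows I_cap^2 >= 0, and when X1 - X2 - Y holds the choice Q = X1 is admissible
   and attains the bound. Both H(X1|X2) = 0 and I(X1X2;Y) = I(X2;Y) force I(X1;Y|X2) = 0, that
   is X1 - X2 - Y. Data processing rests on Gibbs' inequality: I(f;h|g) is the relative entropy
   of the law of (f,g,h) with respect to the Markov law P(f,g) P(g,h) / P(g), so it is
   nonnegative and vanishes exactly on Markov chains.
   For Y = (X1,X2) with a law of full support, the chains Q - X1 - Y and Q - X2 - Y say that
   P(Q = t | X1 = a, X2 = b) depends only on a and only on b, hence not at all: Q is independent
   of Y and I_cap^2 = 0. Two fair bits that agree with probability 2/3 have I(X1;X2) > 0, so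
   (Id) fails, and SI^2 = -I(X1;X2) < 0, so (LP) fails. *)

Section Marginals.
Variable R : realType.
Implicit Types T U V A B C : finType.

Lemma sum_marg T U (f : T -> U) (p : {ffun T -> R}) (F : U -> R) :
  \sum_u marg f p u * F u = \sum_x p x * F (f x).
Proof.
rewrite [RHS](partition_big f xpredT) //=; apply: eq_bigr => u _.
by rewrite ffunE big_distrl; apply: eq_bigr => x /eqP <-.
Qed.

Lemma marg_comp T U V (f : T -> U) (g : U -> V) (p : {ffun T -> R}) :
  marg g (marg f p) = marg (fun x => g (f x)) p.
Proof.
apply/ffunP => w; rewrite !ffunE (partition_big f (fun u => g u == w)) //=.
apply: eq_bigr => u /eqP gu; rewrite ffunE; apply: eq_bigl => x.
by rewrite andbC; case: eqP => // ->; rewrite gu eqxx.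
Qed.

Lemma marg_id T (p : {ffun T -> R}) : marg id p = p.
Proof. by apply/ffunP => x; rewrite ffunE big_pred1_eq. Qed.

Lemma marg_pairE A B (q : {ffun A * B -> R}) : marg (fun x => (x.1, x.2)) q = q.
Proof. by rewrite -[RHS]marg_id; congr marg; apply: funext => -[]. Qed.

Lemma marg_fstE A B (q : {ffun A * B -> R}) a :
  marg fst q a = \sum_b q (a, b).
Proof.
rewrite ffunE (partition_big snd xpredT) //=; apply: eq_bigr => b _.
by rewrite (big_pred1 (a, b)) // => -[a' b']; rewrite /= xpair_eqE.
Qed.

Lemma marg_inj T U V (k : U -> V) (f : T -> U) (F : T -> V) (p : {ffun T -> R}) u :
  injective k -> (forall x, F x = k (f x)) -> marg F p (k u) = marg f p u.
Proof.
by move=> k_inj Fk; rewrite !ffunE; apply: eq_bigl => x; rewrite Fk (inj_eq k_inj).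
Qed.

Lemma marg_out T U (f : T -> U) (p : {ffun T -> R}) u :
  (forall x, f x != u) -> marg f p u = 0.
Proof. by move=> fu; rewrite ffunE big_pred0 // => x; exact/negbTE. Qed.

Lemma marg_supported T U (g : T -> U) (k : U -> T) (p : {ffun T -> R}) :
  (forall x, p x != 0 -> k (g x) = x) -> marg k (marg g p) = p.
Proof.
move=> kg; apply/ffunP => y; rewrite marg_comp ffunE.
have -> : p y = \sum_(x | x == y) p x by rewrite big_pred1_eq.
rewrite big_mkcond [RHS]big_mkcond; apply: eq_bigr => x _.
by have [->|/kg ->] := eqVneq (p x) 0; rewrite ?if_same.
Qed.

Section Nonnegative.
Variables (T : finType) (p : {ffun T -> R}).
Hypothesis p_ge0 : forall x, 0 <= p x.

Lemma marg_ge0 U (f : T -> U) u : 0 <= marg f p u.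
Proof. by rewrite ffunE sumr_ge0. Qed.

Lemma marg_ge U (f : T -> U) x : p x <= marg f p (f x).
Proof. by rewrite ffunE (bigD1 x) //= lerDl sumr_ge0. Qed.

Lemma marg_gt0 U (f : T -> U) x : 0 < p x -> 0 < marg f p (f x).
Proof. by move=> px; exact: lt_le_trans px (marg_ge f x). Qed.

Lemma marg_mono U V (f : T -> U) (g : T -> V) u v :
  (forall x, g x = v -> f x = u) -> marg g p v <= marg f p u.
Proof.
move=> gf; rewrite !ffunE big_mkcond [leRHS]big_mkcond; apply: ler_sum => x _.
case: eqP => [/gf ->|_]; first by rewrite eqxx.
by case: ifP.
Qed.

End Nonnegative.

Lemma marg_pmf T U (f : T -> U) (p : {ffun T -> R}) : is_pmf p -> is_pmf (marg f p).
Proof.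
move=> [p_ge0 p1]; split=> [u|]; first exact: marg_ge0.
by rewrite -p1 -(eq_bigr _ (fun u _ => mulr1 _)) sum_marg; under eq_bigr do rewrite mulr1.
Qed.

End Marginals.

Section Entropy.
Variable R : realType.
Implicit Types T U V A B C : finType.

Lemma HrvE T U (f : T -> U) (p : {ffun T -> R}) :
  Hrv f p = - \sum_x p x * ln (marg f p (f x)).
Proof. by rewrite /Hrv /entropy sum_marg. Qed.

Lemma Hrv_eq T U V (f : T -> U) (g : T -> V) (p : {ffun T -> R}) :
  (forall x y, f x = f y <-> g x = g y) -> Hrv f p = Hrv g p.
Proof.
move=> fg; rewrite !HrvE; congr (- _); apply: eq_bigr => x _; rewrite !ffunE.
by congr (_ * ln _); apply: eq_bigl => y; apply/eqP/eqP => /fg.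
Qed.

Lemma Hrv_inj T U (f : T -> U) (p : {ffun T -> R}) :
  injective f -> Hrv f p = Hrv id p.
Proof. by move=> f_inj; apply: Hrv_eq => x y; split => [/f_inj|->]. Qed.

Lemma Hrv_comp T U V (k : T -> U) (f : U -> V) (p : {ffun T -> R}) :
  Hrv f (marg k p) = Hrv (fun x => f (k x)) p.
Proof. by rewrite /Hrv marg_comp. Qed.

Lemma MI_comp T U A B (k : T -> U) (f : U -> A) (g : U -> B) (p : {ffun T -> R}) :
  MI f g (marg k p) = MI (fun x => f (k x)) (fun x => g (k x)) p.
Proof. by rewrite /MI !Hrv_comp. Qed.

Lemma markov_comp T U A B C (k : T -> U) (f : U -> A) (g : U -> B) (h : U -> C)
    (p : {ffun T -> R}) :
  markov f g h (marg k p) <->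
  markov (fun x => f (k x)) (fun x => g (k x)) (fun x => h (k x)) p.
Proof. by rewrite /markov !marg_comp. Qed.

Lemma Hrv_mono T U V (f : T -> U) (g : T -> V) (p : {ffun T -> R}) :
  (forall x, 0 <= p x) -> (forall x y, g x = g y -> f x = f y) ->
  Hrv f p <= Hrv g p.
Proof.
move=> p_ge0 gf; rewrite !HrvE lerN2; apply: ler_sum => x _.
have [->|px0] := eqVneq (p x) 0; first by rewrite !mul0r.
have px : 0 < p x by rewrite lt_def px0 p_ge0.
have fg : marg g p (g x) <= marg f p (f x) by apply: marg_mono => // y /gf.
by rewrite ler_wpM2l ?p_ge0 // ler_ln ?posrE ?marg_gt0.
Qed.

Lemma Hrv_const T U (p : {ffun T -> R}) (u : U) : is_pmf p -> Hrv (fun=> u) p = 0.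
Proof.
move=> [_ p1]; rewrite HrvE big1 ?oppr0 // => x _.
by rewrite ffunE (eq_bigl xpredT) ?p1 ?ln1 ?mulr0 // => y; rewrite eqxx.
Qed.

Lemma MI_const (T U V : finType) (u : U) (g : T -> V) (p : {ffun T -> R}) :
  is_pmf p -> MI (fun=> u) g p = 0.
Proof.
move=> p_pmf; rewrite /MI Hrv_const // add0r.
by rewrite (Hrv_eq (g := g) p) ?subrr // => x y; split=> [[]|->].
Qed.

Lemma MI_fst_snd_eq0 (A B : finType) (q : {ffun A * B -> R}) :
  is_pmf q -> (forall a b, q (a, b) = marg fst q a * marg snd q b) -> MI fst snd q = 0.
Proof.
move=> [q_ge0 _] qE; apply/eqP; rewrite /MI !HrvE subr_eq0 -opprD eqr_opp -big_split /=.
rewrite marg_pairE; apply/eqP/eq_bigr => -[a b] _ /=.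
have [->|qab_neq0] := eqVneq (q (a, b)) 0; first by rewrite !mul0r addr0.
have qab : 0 < q (a, b) by rewrite lt_def qab_neq0 q_ge0.
by rewrite -mulrDr -lnM ?posrE -?qE ?(marg_gt0 q_ge0 fst qab) ?(marg_gt0 q_ge0 snd qab).
Qed.

End Entropy.

Section Gibbs.
Variable R : realType.

Lemma ln_le_subr1 (x : R) : 0 < x -> ln x <= x - 1.
Proof. by move=> x0; rewrite -ler_expR lnK ?posrE // -{1}(subrK 1 x) addrC expR_ge1Dx. Qed.

Lemma ln_lt_subr1 (x : R) : 0 < x -> x != 1 -> ln x < x - 1.
Proof.
move=> x0 x1; rewrite -ltr_expR lnK ?posrE // -{1}(subrK 1 x) addrC.
by rewrite expR_gt1Dx ?subr_eq0.
Qed.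

Lemma gibbs_gap_ge0 (a b : R) : 0 <= a -> 0 <= b -> (0 < a -> 0 < b) ->
  0 <= b - a - a * ln (b / a).
Proof.
move=> a_ge0 b_ge0 ab; have [->|a_neq0] := eqVneq a 0; first by rewrite mul0r !subr0.
have a_gt0 : 0 < a by rewrite lt_def a_neq0.
have := ler_wpM2l a_ge0 (ln_le_subr1 (divr_gt0 (ab a_gt0) a_gt0)).
by rewrite mulrBr mulr1 mulrCA divff // mulr1 subr_ge0.
Qed.

Lemma gibbs_gap_eq0 (a b : R) : 0 <= a -> 0 <= b -> (0 < a -> 0 < b) ->
  b - a - a * ln (b / a) = 0 -> b = a.
Proof.
move=> a_ge0 b_ge0 ab; have [->|a_neq0] := eqVneq a 0.
  by rewrite mul0r !subr0.
have a_gt0 : 0 < a by rewrite lt_def a_neq0.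
have [/divr1_eq //|ba_neq1] := eqVneq (b / a) 1.
have := ln_lt_subr1 (divr_gt0 (ab a_gt0) a_gt0) ba_neq1; rewrite -(ltr_pM2l a_gt0).
rewrite mulrBr mulr1 mulrCA divff // mulr1 => lt_ln /eqP.
by rewrite subr_eq0 => /eqP eq_ln; move: lt_ln; rewrite eq_ln ltxx.
Qed.

Section Sums.
Variables (T : finType) (a b : T -> R).
Hypotheses (a_ge0 : forall u, 0 <= a u) (b_ge0 : forall u, 0 <= b u).
Hypotheses (ab : forall u, 0 < a u -> 0 < b u) (sum_le : \sum_u b u <= \sum_u a u).

Let gap_ge0 u : 0 <= b u - a u - a u * ln (b u / a u).
Proof. exact: gibbs_gap_ge0 (a_ge0 u) (b_ge0 u) (@ab u). Qed.

Lemma gibbs : \sum_u a u * ln (b u / a u) <= 0.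
Proof.
apply: (@le_trans _ _ (\sum_u (b u - a u))); last by rewrite sumrB subr_le0.
apply: ler_sum => u _; rewrite -subr_ge0; exact: gap_ge0.
Qed.

Lemma gibbs_eq : \sum_u a u * ln (b u / a u) = 0 -> b =1 a.
Proof.
move=> sum0 u; apply: gibbs_gap_eq0 (a_ge0 u) (b_ge0 u) (@ab u) _.
have gaps0 : \sum_u (b u - a u - a u * ln (b u / a u)) = 0.
  apply/eqP; rewrite eq_le sumr_ge0 ?andbT => [|v _]; last exact: gap_ge0.
  by rewrite !sumrB sum0 subr0 subr_le0.
by apply: (psumr_eq0P (fun v _ => gap_ge0 v) gaps0).
Qed.

End Sums.
End Gibbs.

Section ConditionalMutualInformation.
Variables (R : realType) (T A B C : finType).
Variables (f : T -> A) (g : T -> B) (h : T -> C) (p : {ffun T -> R}).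

Definition condMI : R :=
  Hrv (fun x => (f x, g x)) p + Hrv (fun x => (g x, h x)) p - Hrv g p
  - Hrv (fun x => (f x, g x, h x)) p.

Local Notation P3 := (marg (fun x => (f x, g x, h x)) p).
Local Notation P12 := (marg (fun x => (f x, g x)) p).
Local Notation P23 := (marg (fun x => (g x, h x)) p).
Local Notation P2 := (marg g p).

(* Vanishes where P(g) = 0, since x / 0 = 0. *)
Definition markovize (u : A * B * C) : R :=
  P12 (u.1.1, u.1.2) * P23 (u.1.2, u.2) / P2 u.1.2.

Hypothesis p_pmf : is_pmf p.
Let p_ge0 := p_pmf.1.

Lemma marg_pair_sum b : \sum_c P23 (b, c) = P2 b.
Proof. by rewrite -marg_fstE marg_comp. Qed.

Lemma markovize_ge0 u : 0 <= markovize u.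
Proof. by rewrite /markovize !(mulr_ge0, invr_ge0, marg_ge0). Qed.

Lemma markovize_gt0 u : 0 < P3 u -> 0 < markovize u.
Proof.
case: u => [[a b] c] Pu; rewrite /markovize /=.
rewrite !(mulr_gt0, invr_gt0) //; apply: lt_le_trans Pu _;
  by apply: marg_mono => // x [fa gb hc]; rewrite ?fa ?gb ?hc.
Qed.

Lemma sum_markovize : \sum_u markovize u <= 1.
Proof.
rewrite -(marg_pmf (fun x => (f x, g x)) p_pmf).2.
rewrite -(pair_bigA _ (fun ab c => markovize (ab, c))); apply: ler_sum => -[a b] _.
rewrite /markovize /=; under eq_bigr do rewrite mulrAC.
rewrite -big_distrr /= marg_pair_sum.
have [->|P2b_neq0] := eqVneq (P2 b) 0; last by rewrite divfK.
by rewrite mulr0 marg_ge0.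
Qed.

Lemma condMIE : condMI = - \sum_u P3 u * ln (markovize u / P3 u).
Proof.
rewrite (sum_marg _ _ (fun u => ln (markovize u / P3 u))) /condMI !HrvE.
rewrite [in RHS](eq_bigr (fun x => p x * ln (P12 (f x, g x)) + p x * ln (P23 (g x, h x))
    - p x * ln (P2 (g x)) - p x * ln (P3 (f x, g x, h x)))).
  by rewrite !sumrB big_split /=; ring.
move=> x _; have [->|px_neq0] := eqVneq (p x) 0; first by rewrite !mul0r !subr0 addr0.
have px : 0 < p x by rewrite lt_def px_neq0 p_ge0.
rewrite /markovize /= !ln_div ?lnM ?posrE ?(mulr_gt0, divr_gt0, invr_gt0, marg_gt0) //; ring.
Qed.

Lemma condMI_ge0 : 0 <= condMI.
Proof.
have [P3_ge0 P3_1] := marg_pmf (fun x => (f x, g x, h x)) p_pmf.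
rewrite condMIE oppr_ge0 gibbs // => [u|u|]; first exact: markovize_ge0.
  exact: markovize_gt0.
by rewrite P3_1 sum_markovize.
Qed.

Let marg_mid0 a b c : P2 b = 0 -> P12 (a, b) = 0 /\ P3 (a, b, c) = 0.
Proof.
move=> P2b0; split; apply/eqP; rewrite eq_le marg_ge0 // andbT -P2b0;
  by apply: marg_mono => // x [].
Qed.

Lemma markov_markovize : markov f g h p <-> markovize =1 P3.
Proof.
split=> [fgh [[a b] c] | M3 a b c]; rewrite ?/markovize /=.
  have [P2b0|P2b_neq0] := eqVneq (P2 b) 0.
    by rewrite P2b0 invr0 mulr0 (marg_mid0 a c P2b0).2.
  by rewrite -fgh mulfK.
have [P2b0|P2b_neq0] := eqVneq (P2 b) 0.
  by have [-> ->] := marg_mid0 a c P2b0; rewrite !mul0r.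
by rewrite -M3 /markovize /= divfK.
Qed.

Lemma condMI_eq0 : condMI = 0 <-> markov f g h p.
Proof.
have [P3_ge0 P3_1] := marg_pmf (fun x => (f x, g x, h x)) p_pmf.
rewrite markov_markovize condMIE; split=> [/eqP|M3].
  rewrite oppr_eq0 => /eqP /gibbs_eq; apply=> // [u|u|]; first exact: markovize_ge0.
    exact: markovize_gt0.
  by rewrite P3_1 sum_markovize.
rewrite big1 ?oppr0 // => u _; rewrite M3.
by have [->|P3u_neq0] := eqVneq (P3 u) 0; rewrite ?mul0r // divff // ln1 mulr0.
Qed.

End ConditionalMutualInformation.

Lemma data_processing (R : realType) (T A B C : finType) (f : T -> A) (g : T -> B)
    (h : T -> C) (p : {ffun T -> R}) :
  is_pmf p -> markov f g h p -> MI f h p <= MI g h p.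
Proof.
(* I(g;h) - I(f;h) = I(g;h|f) - I(f;h|g) *)
move=> p_pmf /(condMI_eq0 _ _ _ p_pmf) fgh0; have := condMI_ge0 g f h p_pmf.
have swap2 x y : (g x, f x) = (g y, f y) <-> (f x, g x) = (f y, g y).
  by split=> -[-> ->].
have swap3 x y : (g x, f x, h x) = (g y, f y, h y) <-> (f x, g x, h x) = (f y, g y, h y).
  by split=> -[-> -> ->].
move: fgh0; rewrite /condMI /MI (Hrv_eq p swap2) (Hrv_eq p swap3); lra.
Qed.

Lemma markov_of_fun (R : realType) (T A B C : finType) (f : T -> A) (g : T -> B)
    (h : T -> C) (p : {ffun T -> R}) (phi : B -> A) :
  (forall x, f x = phi (g x)) -> markov f g h p.
Proof.
move=> fE a b c; have [->|a_neq] := eqVneq a (phi b).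
  have k3_inj : injective (fun bc : B * C => (phi bc.1, bc.1, bc.2)).
    by move=> [? ?] [? ?] [_ -> ->].
  have k2_inj : injective (fun b : B => (phi b, b)) by move=> ? ? [].
  have -> : marg (fun x => (f x, g x, h x)) p (phi b, b, c) =
            marg (fun x => (g x, h x)) p (b, c).
    by apply: (marg_inj p (b, c) k3_inj) => x; rewrite fE.
  have -> : marg (fun x => (f x, g x)) p (phi b, b) = marg g p b.
    by apply: (marg_inj p b k2_inj) => x; rewrite fE.
  exact: mulrC.
have -> : marg (fun x => (f x, g x, h x)) p (a, b, c) = 0.
  by apply: marg_out => x; rewrite fE; apply: contra a_neq => /eqP[<- <-].
have -> : marg (fun x => (f x, g x)) p (a, b) = 0.
  by apply: marg_out => x; rewrite fE; apply: contra a_neq => /eqP[<- <-].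
by rewrite !mul0r.
Qed.

Section MarkovCriteria.
Variables (R : realType) (T A B C : finType).
Variables (f : T -> A) (g : T -> B) (h : T -> C) (p : {ffun T -> R}).

Lemma condMI_chain : condMI f g h p = MI (fun x => (f x, g x)) h p - MI g h p.
Proof. by rewrite /condMI /MI /=; ring. Qed.

Hypothesis p_pmf : is_pmf p.

Lemma markov_of_condH0 : condH f g p = 0 -> markov f g h p.
Proof.
move=> fg0; apply/(condMI_eq0 _ _ _ p_pmf)/eqP; rewrite eq_le condMI_ge0 // andbT.
have : Hrv (fun x => (g x, h x)) p <= Hrv (fun x => (f x, g x, h x)) p.
  by apply: Hrv_mono p_pmf.1 _ => x y [_ -> ->].
by move: fg0; rewrite /condMI /condH; lra.
Qed.

Lemma markov_of_MI_eq : MI (fun x => (f x, g x)) h p = MI g h p -> markov f g h p.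
Proof. by move=> fgh; apply/(condMI_eq0 _ _ _ p_pmf); rewrite condMI_chain fgh subrr. Qed.

End MarkovCriteria.

Lemma sup_eq_max (R : realType) (E : set R) m : E m -> ubound E m -> sup E = m.
Proof.
move=> Em mE; apply/eqP; rewrite eq_le ge_sup /=; last 2 first.
- by exists m.
- exact: mE.
by apply: sup_upper_bound => //; split; exists m.
Qed.

Section Icap.
Variable R : realType.

Lemma Icap1E (T1 TY : finType) (p : {ffun T1 * TY -> R}) :
  is_pmf p -> Icap1 p = MI fst snd p.
Proof.
move=> p_pmf; apply: sup_eq_max.
  exists T1, (marg (fun w => (w.1, w)) p); split.
  - exact: marg_pmf.
  - by rewrite marg_comp marg_id.
  - by apply/markov_comp; exact: (markov_of_fun _ _ (phi := id)).
  - by rewrite MI_comp.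
by move=> _ [TQ [q [q_pmf <- Q1Y ->]]]; rewrite MI_comp; exact: data_processing.
Qed.

Section Icap2.
Variables (T1 T2 TY : finType) (p : {ffun T1 * T2 * TY -> R}).
Local Notation X1 := (@rX1 T1 T2 TY).
Local Notation X2 := (@rX2 T1 T2 TY).
Local Notation Y := (@rY T1 T2 TY).

Lemma Icap2_set_le v : Icap2_set p v -> v <= MI X1 Y p.
Proof.
by move=> [TQ [q [q_pmf <- Q1Y _ ->]]]; rewrite MI_comp; exact: data_processing.
Qed.

Hypothesis p_pmf : is_pmf p.

Lemma Icap2_set0 : Icap2_set p 0.
Proof.
exists unit, (marg (fun w => (tt, w)) p); split.
- exact: marg_pmf.
- by rewrite marg_comp marg_id.
- by apply/markov_comp; exact: (markov_of_fun _ _ (phi := fun=> tt)).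
- by apply/markov_comp; exact: (markov_of_fun _ _ (phi := fun=> tt)).
- by rewrite MI_comp MI_const.
Qed.

Let Icap2_has_sup : has_sup (Icap2_set p).
Proof. by split; [exists 0; exact: Icap2_set0 | exists (MI X1 Y p) => v /Icap2_set_le]. Qed.

Lemma Icap2_ge0 : 0 <= Icap2 p.
Proof. exact: sup_upper_bound Icap2_has_sup _ Icap2_set0. Qed.

Lemma Icap2_le_MI : Icap2 p <= MI X1 Y p.
Proof. by apply: ge_sup; [exists 0; exact: Icap2_set0 | move=> v /Icap2_set_le]. Qed.

Lemma Icap2_markov : markov X1 X2 Y p -> Icap2 p = MI X1 Y p.
Proof.
move=> X1X2Y; apply: sup_eq_max => [|v /Icap2_set_le //].
exists T1, (marg (fun w => (w.1.1, w)) p); split.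
- exact: marg_pmf.
- by rewrite marg_comp marg_id.
- by apply/markov_comp; exact: (markov_of_fun _ _ (phi := id)).
- by apply/markov_comp.
- by rewrite MI_comp.
Qed.

End Icap2.

Lemma Icap2_set_swap (T1 T2 TY : finType) (p : {ffun T1 * T2 * TY -> R}) :
  Icap2_set p `<=` Icap2_set (swap12 p).
Proof.
move=> _ [TQ [q [q_pmf qp Q1Y Q2Y ->]]].
exists TQ, (marg (fun w => (w.1, (w.2.1.2, w.2.1.1, w.2.2))) q); split.
- exact: marg_pmf.
- by rewrite marg_comp /swap12 -qp marg_comp.
- by apply/markov_comp.
- by apply/markov_comp.
- by rewrite MI_comp.
Qed.

Lemma swap12K (T1 T2 TY : finType) (p : {ffun T1 * T2 * TY -> R}) : swap12 (swap12 p) = p.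
Proof. by rewrite /swap12 marg_comp -[RHS]marg_id; congr marg; apply: funext => -[[]]. Qed.

Lemma Icap2_swap (T1 T2 TY : finType) (p : {ffun T1 * T2 * TY -> R}) :
  Icap2 p = Icap2 (swap12 p).
Proof.
rewrite /Icap2; congr sup; apply/seteqP; split; first exact: Icap2_set_swap.
by rewrite -{2}(swap12K p); exact: Icap2_set_swap.
Qed.

End Icap.

Section CopyIndependence.
Variables (R : realType) (TQ T1 T2 : finType) (q : {ffun TQ * (T1 * T2) -> R}).
Local Notation p := (marg snd q).
Hypotheses (q_pmf : is_pmf q) (p_gt0 : forall y, 0 < p y).
Hypotheses (QX1 : markov fst (fun u => u.2.1) snd q) (QX2 : markov fst (fun u => u.2.2) snd q).

Let p_ge0 y : 0 <= p y. Proof. exact: (marg_ge0 q_pmf.1). Qed.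

Lemma markov_ratio (V : finType) (pi : T1 * T2 -> V) t y :
  markov fst (fun u => pi u.2) snd q ->
  q (t, y) / p y = marg (fun u => (u.1, pi u.2)) q (t, pi y) / marg pi p (pi y).
Proof.
move=> /(_ t (pi y) y); rewrite -(marg_comp snd pi).
have -> : marg (fun u => (u.1, pi u.2, u.2)) q (t, pi y, y) = q (t, y).
  rewrite -{2}(marg_id q); apply: (marg_inj q (t, y) (k := fun u => (u.1, pi u.2, u.2))).
    by move=> [? ?] [? ?] [-> _ ->].
  by [].
have -> : marg (fun u => (pi u.2, u.2)) q (pi y, y) = p y.
  by apply: (marg_inj q y (k := fun y => (pi y, y))) => // ? ? [_ ->].
have py_neq0 : p y != 0 by rewrite lt0r_neq0.
have pi_neq0 : marg pi p (pi y) != 0 by rewrite lt0r_neq0 ?(marg_gt0 p_ge0).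
by move=> Mty; apply/eqP; rewrite eqr_div // Mty.
Qed.

Lemma double_markov_indep : MI fst snd q = 0.
Proof.
have p_neq0 y : p y != 0 by rewrite lt0r_neq0.
have ratio_const t y z : q (t, y) / p y = q (t, z) / p z.
  transitivity (q (t, (y.1, z.2)) / p (y.1, z.2)).
    by rewrite !(markov_ratio (pi := fst) _ _ QX1).
  by rewrite !(markov_ratio (pi := snd) _ _ QX2).
apply: MI_fst_snd_eq0 => // t y; rewrite marg_fstE.
have qE z : q (t, z) = q (t, y) / p y * p z by rewrite (ratio_const t y z) divfK.
under eq_bigr do rewrite qE.
by rewrite -big_distrr /= (marg_pmf snd q_pmf).2 mulr1 divfK.
Qed.

End CopyIndependence.

Section CopyY.
Variables (R : realType) (T1 T2 : finType) (p : {ffun T1 * T2 -> R}).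

Lemma copyY_support (TQ : finType) (q : {ffun TQ * (T1 * T2 * (T1 * T2)) -> R}) w :
  is_pmf q -> marg snd q = copyY p -> q w != 0 -> w.2.1 = w.2.2.
Proof.
case: w => t [x y] [q_ge0 _] qp; apply: contraNeq => /= x_neq_y.
rewrite eq_le q_ge0 andbT (le_trans (marg_ge q_ge0 snd (t, (x, y)))) //= qp.
rewrite marg_out // => z; apply: contra x_neq_y => /eqP [<- <-].
by case: z.
Qed.

Lemma Icap2_copyY : is_pmf p -> (forall y, 0 < p y) -> Icap2 (copyY p) = 0.
Proof.
move=> p_pmf p_gt0; apply: sup_eq_max; first exact/Icap2_set0/marg_pmf.
move=> _ [TQ [q [q_pmf qp QX1 QX2 ->]]].
set qTY := marg (fun w => (w.1, w.2.2)) q.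
have qE : marg (fun u => (u.1, (u.2, u.2))) qTY = q.
  by apply: marg_supported => -[t [x y]] /(copyY_support q_pmf qp) /= ->.
have pE : marg snd qTY = p.
  by rewrite marg_comp -(marg_comp snd snd) qp marg_comp; exact: marg_id.
suff MI0 : MI fst snd qTY = 0 by rewrite -qE MI_comp MI0.
apply: double_markov_indep; rewrite ?pE //.
- exact: marg_pmf.
- by move: QX1; rewrite -qE => /markov_comp.
- by move: QX2; rewrite -qE => /markov_comp.
Qed.

Lemma SI2_copyY : SI2 (copyY p) = Icap2 (copyY p) - MI fst snd p.
Proof.
have H12 : Hrv (fun z => (z.1, z.2)) p = Hrv id p by apply: Hrv_inj => -[? ?] [? ?] /= [-> ->].
have H12Y : Hrv (fun z => (z.1, z.2, z)) p = Hrv id p by apply: Hrv_inj => ? ? [_ _ ->].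
have H1Y : Hrv (fun z => (z.1, z)) p = Hrv id p by apply: Hrv_inj => ? ? [_ ->].
have H2Y : Hrv (fun z => (z.2, z)) p = Hrv id p by apply: Hrv_inj => ? ? [_ ->].
rewrite /SI2 /copyY !MI_comp /MI /= H12 H12Y H1Y H2Y; ring.
Qed.

End CopyY.

Section Example.
Variable R : realType.

Definition corr_bits : {ffun bool * bool -> R} :=
  [ffun w => if w.1 == w.2 then 3^-1 else 6^-1].

Lemma sum_bool2 (F : bool * bool -> R) :
  \sum_y F y = F (true, true) + F (true, false) + (F (false, true) + F (false, false)).
Proof.
rewrite (eq_bigr (fun y => F (y.1, y.2))) => [|[] //].
by rewrite -(pair_bigA _ (fun a b => F (a, b))) !big_bool.
Qed.

Lemma corr_bits_gt0 y : 0 < corr_bits y.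
Proof. by rewrite ffunE; case: ifP => _; rewrite invr_gt0. Qed.

Lemma corr_bits_pmf : is_pmf corr_bits.
Proof.
split=> [y|]; first exact/ltW/corr_bits_gt0.
by rewrite sum_bool2 !ffunE /=; lra.
Qed.

Lemma marg_corr_bits (pi : bool * bool -> bool) b :
  pi = fst \/ pi = snd -> marg pi corr_bits b = 2^-1.
Proof. by case=> ->; rewrite ffunE big_mkcond sum_bool2 !ffunE; case: b => /=; lra. Qed.

Lemma MI_corr_bits_gt0 : 0 < MI fst snd corr_bits.
Proof.
have l2 : ln (2^-1 : R) = - ln 2 by rewrite lnV ?posrE.
have l3 : ln (3^-1 : R) = - ln 3 by rewrite lnV ?posrE.
have l6 : ln (6^-1 : R) = - (ln 2 + ln 3).
  by rewrite lnV ?posrE // -lnM ?posrE //; congr (- ln _); lra.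
have ln_27_32 : 3 * ln (3 : R) < 5 * ln 2.
  by rewrite !mulr_natl -!lnXn // ltr_ln ?posrE ?exprn_gt0 // -!natrX ltr_nat.
rewrite /MI /Hrv /entropy marg_pairE !big_bool sum_bool2.
rewrite !marg_corr_bits; try by [left | right].
by rewrite !ffunE /= l2 l3 l6; lra.
Qed.

End Example.

Theorem proposition1 (R : realType) :
  (forall (T1 T2 TY : finType) (p : {ffun T1 * T2 * TY -> R}), is_pmf p ->
     [/\ (* (GP) *) 0 <= Icap2 p,
         (* (S) *) Icap2 p = Icap2 (swap12 p),
         (* (M) *) Icap2 p <= Icap1 (law1Y p) /\
            (condH (@rX1 T1 T2 TY) (@rX2 T1 T2 TY) p = 0 -> Icap2 p = Icap1 (law1Y p)) &
         (* (SM) *) Icap2 p <= Icap1 (law1Y p) /\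
            (MI (@rX12 T1 T2 TY) (@rY T1 T2 TY) p = MI (@rX2 T1 T2 TY) (@rY T1 T2 TY) p ->
             Icap2 p = Icap1 (law1Y p))]) /\
  (* (I) *)
  (forall (T1 TY : finType) (p : {ffun T1 * TY -> R}), is_pmf p ->
     Icap1 p = MI fst snd p) /\
  (* not (LP) *)
  (exists (T1 T2 TY : finType) (p : {ffun T1 * T2 * TY -> R}),
     is_pmf p /\ SI2 p < 0) /\
  (* not (Id) *)
  (exists (T1 T2 : finType) (p : {ffun T1 * T2 -> R}),
     is_pmf p /\ Icap2 (copyY p) <> MI fst snd p).
Proof.
split.
  move=> T1 T2 TY p p_pmf.
  have -> : Icap1 (law1Y p) = MI (@rX1 T1 T2 TY) (@rY T1 T2 TY) p
    by rewrite Icap1E /law1Y ?MI_comp //; exact: marg_pmf.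
  have Icap2_le := Icap2_le_MI p_pmf; have Icap2_eq := Icap2_markov p_pmf.
  have -> : @rX12 T1 T2 TY = fun w => (rX1 w, rX2 w) by apply: funext => -[[]].
  split; [exact: Icap2_ge0 | exact: Icap2_swap | split=> // | split=> //].
    by move/(markov_of_condH0 (@rY T1 T2 TY) p_pmf)/Icap2_eq.
  by move/(markov_of_MI_eq p_pmf)/Icap2_eq.
split; first exact: Icap1E.
have Icap2_0 := Icap2_copyY (corr_bits_pmf R) (@corr_bits_gt0 R).
have MI_gt0 := MI_corr_bits_gt0 R.
split.
  exists bool, bool, (bool * bool)%type, (copyY (corr_bits R)); split.
    exact/marg_pmf/corr_bits_pmf.
  by rewrite SI2_copyY Icap2_0 sub0r oppr_lt0.
exists bool, bool, (corr_bits R); split; first exact: corr_bits_pmf.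
by rewrite Icap2_0 => MI0; move: MI_gt0; rewrite -MI0 ltxx.
Qed.
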